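(* Let $W_{(\alpha,\beta)}=(T_1,T_2)$ be a commuting 2-variable weighted shift and let $L=\begin{pmatrix} T_1^*T_1 & T_2^*T_1\\ T_1^*T_2 & T_2^*T_2\end{pmatrix}$. Then the following are equivalent: (a) $L\ge0$; (b) $\alpha_{\mathbf{k}+\varepsilon_2}\beta_{\mathbf{k}+\varepsilon_1}\le\alpha_{\mathbf{k}+\varepsilon_1}\beta_{\mathbf{k}+\varepsilon_2}$ for all $\mathbf{k}\in\mathbb{Z}_+^2$; (c) $\gamma_{\mathbf{k}+\varepsilon_1+\varepsilon_2}^2\le\gamma_{\mathbf{k}+2\varepsilon_1}\gamma_{\mathbf{k}+2\varepsilon_2}$ for all $\mathbf{k}\in\mathbb{Z}_+^2$.
   Context: A 2-variable weighted shift $W_{(\alpha,\beta)}=(T_1,T_2)$ on $\ell^2(\mathbb{Z}_+^2)$ (orthonormal basis $\{e_{\mathbf{k}}\}$) is given by bounded positive weights via $T_1e_{\mathbf{k}}=\alpha_{\mathbf{k}}e_{\mathbf{k}+\varepsilon_1}$, $T_2e_{\mathbf{k}}=\beta_{\mathbf{k}}e_{\mathbf{k}+\varepsilon_2}$, $\varepsilon_1=(1,0)$, $\varepsilon_2=(0,1)$; it is commuting iff $\beta_{\mathbf{k}+\varepsilon_1}\alpha_{\mathbf{k}}=\alpha_{\mathbf{k}+\varepsilon_2}\beta_{\mathbf{k}}$ for all $\mathbf{k}$. The moments are $\gamma_{(0,0)}=1$ and, for $\mathbf{k}=(k_1,k_2)$, $\gamma_{\mathbf{k}}=\alpha_{(0,0)}^2\cdots\alpha_{(k_1-1,0)}^2\,\beta_{(k_1,0)}^2\cdots\beta_{(k_1,k_2-1)}^2$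 (empty products equal $1$). *)

From HB Require Import structures.
From mathcomp Require Import all_boot all_order all_algebra.
From mathcomp Require Import all_classical all_reals topology normedtype sequences.
From mathcomp Require Import complex.
Set Implicit Arguments. Unset Strict Implicit. Unset Printing Implicit Defensive.
Import Order.TTheory GRing.Theory Num.Theory numFieldNormedType.Exports.
Local Open Scope ring_scope.

(* Vectors of l^2(Z_+^2) over the complex field R[i]:
   x : nat * nat -> R[i], x (k1,k2) = <x, e_(k1,k2)>. *)
Section TwoVar.
Variable R : realType.
Local Notation C := R[i].

Definition vec := nat * nat -> C.

Definition psum (f : nat * nat -> C) (N : nat) : C :=
  \sum_(i < N) \sum_(j < N) f (i : nat, j : nat).

Definition sqnorm (z : C) : R := complex.Re z ^+ 2 + complex.Im z ^+ 2.

Definition in_l2 (x : vec) : Prop :=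
  exists M : R, forall N : nat,
    \sum_(i < N) \sum_(j < N) sqnorm (x (i : nat, j : nat)) <= M.

Definition ip (u v : vec) : C :=
  let S := psum (fun k => u k * (v k)^*)%C in
  (limn (fun N : nat => (complex.Re (S N) : R)) +i* limn (fun N : nat => (complex.Im (S N) : R)))%C.

(* the weighted shifts: T1 e_k = alpha_k e_(k+eps1), T2 e_k = beta_k e_(k+eps2) *)
Definition shift1 (alpha : nat * nat -> R) (x : vec) : vec :=
  fun k => match k with
           | (i.+1, j) => ((alpha (i, j))%:C * x (i, j))%C
           | _ => 0
           end.

Definition shift2 (beta : nat * nat -> R) (x : vec) : vec :=
  fun k => match k with
           | (i, j.+1) => ((beta (i, j))%:C * x (i, j))%C
           | _ => 0
           end.

Definition commuting_2var_shift (alpha beta : nat * nat -> R) : Prop :=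
  [/\ forall k, 0 < alpha k,
      forall k, 0 < beta k,
      exists M : R, forall k, alpha k <= M /\ beta k <= M
    & forall k1 k2, beta (k1.+1, k2) * alpha (k1, k2)
                    = alpha (k1, k2.+1) * beta (k1, k2)].

(* <L (x,y), (x,y)> for L = [[T1*T1, T2*T1],[T1*T2, T2*T2]] on l^2 (+) l^2,
   with the adjoints moved across the inner product:
   <T1*T1 x + T2*T1 y, x> + <T1*T2 x + T2*T2 y, y>
   = <T1 x,T1 x> + <T1 y,T2 x> + <T2 x,T1 y> + <T2 y,T2 y>. *)
Definition Lform (alpha beta : nat * nat -> R) (x y : vec) : C :=
  let T1 := shift1 alpha in let T2 := shift2 beta in
  ip (T1 x) (T1 x) + ip (T1 y) (T2 x) + ip (T2 x) (T1 y) + ip (T2 y) (T2 y).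

Definition L_pos (alpha beta : nat * nat -> R) : Prop :=
  forall x y : vec, in_l2 x -> in_l2 y -> 0 <= Lform alpha beta x y.

Definition gamma (alpha beta : nat * nat -> R) (k1 k2 : nat) : R :=
  (\prod_(i < k1) alpha (i : nat, 0%N) ^+ 2) *
  (\prod_(j < k2) beta (k1, j : nat) ^+ 2).

End TwoVar.

(* (b) <-> (c): gamma_(k+e1) = gamma_k alpha_k^2 and, by commutativity, also
   gamma_(k+e2) = gamma_k beta_k^2, so both sides of (c) are
   (gamma_k alpha_k beta_k)^2 times the squares of the two sides of (b).
   (a) -> (b): at x = beta_(k+e2) e_(k+e1), y = -alpha_(k+e1) e_(k+e2) the form
   <L(x,y),(x,y)> equals 2pq(pq - st), where pq and st are the two sides of (b).
   (b) -> (a): for bounded weights the four inner products converge absolutely and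
   <L(x,y),(x,y)> = |T1 x|^2 + 2 Re <T1 y, T2 x> + |T2 y|^2. Collecting, for each k,
   the terms at k+2e1, k+e1+e2 and k+2e2, which involve only x_(k+e1) and
   y_(k+e2), gives binary quadratic forms that are nonnegative under (b); all
   other terms of the norms are nonnegative. *)

From HB Require Import structures.
From mathcomp Require Import all_boot all_order all_algebra.
From mathcomp Require Import all_classical all_reals topology normedtype sequences.
From mathcomp Require (* Re-imported so that Re and Im are the projections of R[i], not Num.Theory's. *)
Import complex.
From mathcomp Require Import ring lra.
Import Order.TTheory GRing.Theory Num.Theory numFieldNormedType.Exports.
Import complex.

Set Implicit Arguments.
Unset Strict Implicit.
Unset Printing Implicit Defensive.

Local Open Scope ring_scope.

Lemma limn_shiftS (T : ptopologicalType) (u : T^nat) : limn (fun n => u n.+1) = limn u.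
Proof. rewrite /lim; congr get; apply/funext => l; exact: cvg_shiftS. Qed.

Lemma ler_sqr_bound (R : realDomainType) (a M : R) : `|a| <= M -> a ^+ 2 <= M ^+ 2.
Proof. by move=> aM; rewrite -real_normK ?num_real // ler_sqr ?nnegrE ?(le_trans _ aM). Qed.

Definition supported_at (V : nmodType) (f : nat * nat -> V) (k0 : nat * nat) :=
  forall k, k != k0 -> f k = 0.

Section ComplexParts.
Variable R : rcfType.
Local Open Scope complex_scope.
Implicit Types u v : R[i].

Lemma ReD u v : Re (u + v) = Re u + Re v. Proof. by case: u; case: v. Qed.
Lemma ImD u v : Im (u + v) = Im u + Im v. Proof. by case: u; case: v. Qed.

Lemma Re_sum I (r : seq I) (P : pred I) (F : I -> R[i]) :
  Re (\sum_(i <- r | P i) F i) = \sum_(i <- r | P i) Re (F i).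
Proof. exact: (big_morph _ ReD). Qed.

Lemma Im_sum I (r : seq I) (P : pred I) (F : I -> R[i]) :
  Im (\sum_(i <- r | P i) F i) = \sum_(i <- r | P i) Im (F i).
Proof. exact: (big_morph _ ImD). Qed.

Lemma Re_mulJ u v : Re (u * v^*) = Re u * Re v + Im u * Im v.
Proof. by case: u => a b; case: v => c d /=; ring. Qed.

Lemma Im_mulJ u v : Im (u * v^*) = Im u * Re v - Re u * Im v.
Proof. by case: u => a b; case: v => c d /=; ring. Qed.

Lemma Re_mulJC u v : Re (v * u^*) = Re (u * v^*).
Proof. by rewrite !Re_mulJ mulrC [Im v * _]mulrC. Qed.

Lemma Im_mulJC u v : Im (v * u^*) = - Im (u * v^*).
Proof. rewrite !Im_mulJ; ring. Qed.

Lemma Im_mulJ_self u : Im (u * u^*) = 0.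
Proof. by rewrite Im_mulJ mulrC subrr. Qed.

Lemma Re_mulJ_ge0 u : 0 <= Re (u * u^*).
Proof. by rewrite Re_mulJ -!expr2 addr_ge0 ?sqr_ge0. Qed.

End ComplexParts.

Section DoubleSum.
Variable R : numDomainType.
Implicit Types f g : nat * nat -> R.

Definition dsum f N := \sum_(i < N) \sum_(j < N) f (i : nat, j : nat).

Lemma dsumD f g N : dsum (fun k => f k + g k) N = dsum f N + dsum g N.
Proof. by rewrite /dsum -big_split; apply: eq_bigr => i _; rewrite -big_split. Qed.

Lemma dsumN f N : dsum (fun k => - f k) N = - dsum f N.
Proof. by rewrite /dsum -sumrN; apply: eq_bigr => i _; rewrite -sumrN. Qed.

Lemma ler_dsum f g N : (forall k, f k <= g k) -> dsum f N <= dsum g N.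
Proof. by move=> fg; do 2![apply: ler_sum => ? _]; exact: fg. Qed.

Lemma dsum_ge0 f N : (forall k, 0 <= f k) -> 0 <= dsum f N.
Proof. by move=> f0; do 2![apply: sumr_ge0 => ? _]; exact: f0. Qed.

Lemma dsum_swap f N : dsum f N = dsum (fun k => f (k.2, k.1)) N.
Proof. exact: exchange_big. Qed.

Lemma ler_sum_shift (g : nat -> R) a n m : (forall i, 0 <= g i) -> (n + a <= m)%N ->
  \sum_(i < n) g (i + a)%N <= \sum_(i < m) g i.
Proof.
move=> g0 nam; rewrite -(subnKC nam) big_split_ord /= (addnC n a) big_split_ord /=.
apply: ler_wpDr; first exact: sumr_ge0.
apply: ler_wpDl; first exact: sumr_ge0.
by apply: ler_sum => i _; rewrite addnC.
Qed.

Lemma ler_dsum_shift f a b n m : (forall k, 0 <= f k) ->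
  (n + a <= m)%N -> (n + b <= m)%N ->
  \sum_(i < n) \sum_(j < n) f ((i + a)%N, (j + b)%N) <= dsum f m.
Proof.
move=> f0 nam nbm.
apply: (le_trans _ (ler_sum_shift (g := fun i => \sum_(j < m) f (i, j : nat)) _ nam)).
  by apply: ler_sum => i _; exact: (ler_sum_shift (g := fun j => f ((i + a)%N, j)) _ nbm).
by move=> i; apply: sumr_ge0.
Qed.

Lemma dsum_nondecreasing f : (forall k, 0 <= f k) ->
  {homo dsum f : n m / (n <= m)%N >-> n <= m}.
Proof.
move=> f0 n m nm; have := @ler_dsum_shift f 0 0 n m f0; rewrite addn0 => /(_ nm nm).
by under eq_bigr do under eq_bigr do rewrite !addn0.
Qed.

Lemma dsum_shiftl_le f g (c : R) N : 0 <= c -> (forall k, 0 <= g k) ->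
  (forall j, f (0%N, j) = 0) -> (forall i j, f (i.+1, j) <= c * g (i, j)) ->
  dsum f N <= c * dsum g N.
Proof.
move=> c0 g0 f0 fg; case: N => [|N]; first by rewrite /dsum !big_ord0 mulr0.
rewrite /dsum big_ord_recl big1 ?add0r => [|j _]; last exact: f0.
rewrite [X in _ <= c * X]big_ord_recr /= mulrDr ler_wpDr //.
  by apply: mulr_ge0 => //; apply: sumr_ge0 => j _.
rewrite mulr_sumr; apply: ler_sum => i _; rewrite mulr_sumr.
by apply: ler_sum => j _; exact: fg.
Qed.

Lemma dsum_shiftr_le f g (c : R) N : 0 <= c -> (forall k, 0 <= g k) ->
  (forall i, f (i, 0%N) = 0) -> (forall i j, f (i, j.+1) <= c * g (i, j)) ->
  dsum f N <= c * dsum g N.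
Proof.
move=> c0 g0 f0 fg; rewrite dsum_swap [dsum g N]dsum_swap.
by apply: dsum_shiftl_le => // i j; exact: fg.
Qed.

Lemma dsum_supported f k0 N : supported_at f k0 ->
  (k0.1 < N)%N -> (k0.2 < N)%N -> dsum f N = f k0.
Proof.
case: k0 => p q f0 /= pN qN.
rewrite /dsum (bigD1 (Ordinal pN)) //= [X in _ + X]big1 ?addr0 => [|i ip]; last first.
  apply: big1 => j _; apply: f0; rewrite xpair_eqE negb_and; apply/orP; left.
  by apply: contra ip => /eqP ip; apply/eqP/val_inj.
rewrite (bigD1 (Ordinal qN)) //= [X in _ + X]big1 ?addr0 // => j jq.
apply: f0; rewrite xpair_eqE negb_and; apply/orP; right.
by apply: contra jq => /eqP jq; apply/eqP/val_inj.
Qed.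

Lemma dsum_axes0 f n : (forall j, f (0%N, j) = 0) -> (forall i, f (i, 0%N) = 0) ->
  dsum f n.+1 = \sum_(i < n) \sum_(j < n) f (i.+1, j.+1).
Proof.
move=> f0 f0'; rewrite /dsum big_ord_recl big1 ?add0r => [|j _]; last exact: f0.
by apply: eq_bigr => i _; rewrite big_ord_recl f0' add0r.
Qed.

End DoubleSum.

Section DoubleSumLimits.
Variable R : realType.
Implicit Types f g : nat * nat -> R.

Lemma cvg_dsum_ge0 f B : (forall k, 0 <= f k) -> (forall N, dsum f N <= B) ->
  cvgn (dsum f).
Proof.
move=> f0 fB; apply: nondecreasing_is_cvgn; first exact: dsum_nondecreasing.
by exists B => _ [N _ <-].
Qed.

Lemma cvg_dsum_dominated f g B : (forall k, `|f k| <= g k) ->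
  (forall N, dsum g N <= B) -> cvgn (dsum f).
Proof.
move=> fg gB; have g0 k : 0 <= g k by apply: le_trans (fg k).
have -> : dsum f = dsum (fun k => g k + f k) - dsum g.
  by apply/funext => N; rewrite !fctE dsumD addrC addKr.
apply: is_cvgB; last exact: cvg_dsum_ge0 g0 gB.
apply: (@cvg_dsum_ge0 _ (B + B)) => [k|N].
  by rewrite -lerBlDr sub0r; apply: le_trans (fg k); rewrite -normrN ler_norm.
rewrite dsumD lerD // (le_trans _ (gB N)) //.
by apply: ler_dsum => k; apply: le_trans (fg k); exact: ler_norm.
Qed.

Lemma limn_dsum_supported f k0 : supported_at f k0 -> limn (dsum f) = f k0.
Proof.
move=> f0; apply: (@lim_near_cst _ (@Rhausdorff R)); near=> N.
by apply: dsum_supported => //; near: N; exact: nbhs_infty_gt.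
Unshelve. all: by end_near.
Qed.

Lemma limn_shift_ge0 (u v w : R^nat) : cvgn u -> cvgn v -> cvgn w ->
  (forall N, 0 <= u N.+1 + v N *+ 2 + w N.+1) -> 0 <= limn u + limn v *+ 2 + limn w.
Proof.
move=> cu cv cw uvw0.
have cuS : cvgn (fun N => u N.+1) by apply/cvg_ex; exists (limn u); rewrite cvg_shiftS.
have cwS : cvgn (fun N => w N.+1) by apply/cvg_ex; exists (limn w); rewrite cvg_shiftS.
have cvv : cvgn (v + v) by exact: is_cvgD.
have cuv : cvgn ((fun N => u N.+1) + (v + v)) by exact: is_cvgD.
rewrite -(limn_shiftS u) -(limn_shiftS w) mulr2n -!limD //.
apply: (limr_ge (is_cvgD cuv cwS)).
by apply: nearW => N; rewrite !fctE -mulr2n.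
Qed.

End DoubleSumLimits.

Section SquareSummable.
Variable R : realType.
Local Open Scope complex_scope.
Implicit Types (u v x : vec R) (z w : R[i]).

Lemma sqnorm_ge0 z : 0 <= sqnorm z.
Proof. by rewrite addr_ge0 ?sqr_ge0. Qed.

Lemma sqnorm0 : sqnorm (0 : R[i]) = 0.
Proof. by rewrite /sqnorm /= expr0n addr0. Qed.

Lemma sqnormZ (a : R) z : sqnorm (a%:C * z) = a ^+ 2 * sqnorm z.
Proof. by case: z => c d; rewrite /sqnorm /=; ring. Qed.

Lemma normr_Re_mulJ_le z w : `|Re (z * w^*)| <= sqnorm z + sqnorm w.
Proof.
case: z w => a b [c d]; rewrite Re_mulJ /sqnorm /= ler_norml; apply/andP; split.
  by have := sqr_ge0 (a + c); have := sqr_ge0 (b + d); nra.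
by have := sqr_ge0 (a - c); have := sqr_ge0 (b - d); nra.
Qed.

Lemma normr_Im_mulJ_le z w : `|Im (z * w^*)| <= sqnorm z + sqnorm w.
Proof.
case: z w => a b [c d]; rewrite Im_mulJ /sqnorm /= ler_norml; apply/andP; split.
  by have := sqr_ge0 (b + c); have := sqr_ge0 (a - d); nra.
by have := sqr_ge0 (b - c); have := sqr_ge0 (a + d); nra.
Qed.

Lemma Re_ip u v : Re (ip u v) = limn (dsum (fun k => Re (u k * (v k)^*))).
Proof.
by congr (limn _); apply/funext => N; rewrite /psum Re_sum; under eq_bigr do rewrite Re_sum.
Qed.

Lemma Im_ip u v : Im (ip u v) = limn (dsum (fun k => Im (u k * (v k)^*))).
Proof.
by congr (limn _); apply/funext => N; rewrite /psum Im_sum; under eq_bigr do rewrite Im_sum.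
Qed.

Lemma cvg_dsum_l2_dominated u v (F : nat * nat -> R) : in_l2 u -> in_l2 v ->
  (forall k, `|F k| <= sqnorm (u k) + sqnorm (v k)) -> cvgn (dsum F).
Proof.
move=> [Mu uMu] [Mv vMv] Fuv; apply: (cvg_dsum_dominated (B := Mu + Mv) Fuv) => N.
by rewrite dsumD; apply: lerD; [exact: uMu | exact: vMv].
Qed.

Lemma cvg_Re_ip u v : in_l2 u -> in_l2 v -> cvgn (dsum (fun k => Re (u k * (v k)^*))).
Proof. by move=> lu lv; apply: cvg_dsum_l2_dominated lu lv _ => k; apply: normr_Re_mulJ_le. Qed.

Lemma cvg_Im_ip u v : in_l2 u -> in_l2 v -> cvgn (dsum (fun k => Im (u k * (v k)^*))).
Proof. by move=> lu lv; apply: cvg_dsum_l2_dominated lu lv _ => k; apply: normr_Im_mulJ_le. Qed.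

Lemma Re_ipC u v : Re (ip v u) = Re (ip u v).
Proof.
rewrite !Re_ip; congr (limn _); apply/funext => N; congr (dsum _ N).
by apply/funext => k; exact: Re_mulJC.
Qed.

Lemma Im_ipC u v : in_l2 u -> in_l2 v -> Im (ip v u) = - Im (ip u v).
Proof.
move=> lu lv; rewrite !Im_ip -limN; last exact: cvg_Im_ip.
congr (limn _); apply/funext => N; rewrite fctE -dsumN; congr (dsum _ N).
by apply/funext => k; exact: Im_mulJC.
Qed.

Lemma Im_ip_self u : Im (ip u u) = 0.
Proof.
rewrite Im_ip (_ : dsum _ = cst 0) ?lim_cst //; apply/funext => N.
by rewrite /dsum big1 // => i _; rewrite big1 // => j _; exact: Im_mulJ_self.
Qed.

Definition point_vec (k0 : nat * nat) z : vec R := fun k => if k == k0 then z else 0.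

Lemma point_vec_supported k0 z : supported_at (point_vec k0 z) k0.
Proof. by move=> k /negbTE; rewrite /point_vec => ->. Qed.

Lemma in_l2_supported x k0 : supported_at x k0 -> in_l2 x.
Proof.
move=> x0; exists (sqnorm (x k0)) => N.
have sq0 k : 0 <= sqnorm (x k) by exact: sqnorm_ge0.
have NM : (N <= maxn N (maxn k0.1 k0.2).+1)%N by exact: leq_maxl.
apply: le_trans (dsum_nondecreasing sq0 NM) _.
rewrite (dsum_supported (k0 := k0)) // => [k /x0 ->||]; first exact: sqnorm0.
  by rewrite leq_max ltnS leq_max leqnn orbT.
by rewrite leq_max ltnS leq_max leqnn !orbT.
Qed.

Lemma Re_ip_supported u v k0 : supported_at u k0 ->
  Re (ip u v) = Re (u k0 * (v k0)^*).
Proof. by move=> u0; rewrite Re_ip; apply: limn_dsum_supported => k /u0 ->; rewrite mul0r. Qed.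

Lemma shift1_supported (alpha : nat * nat -> R) x p q :
  supported_at x (p, q) -> supported_at (shift1 alpha x) (p.+1, q).
Proof. by move=> x0 [[|i] j] //= ij; rewrite x0 ?mulr0. Qed.

Lemma shift2_supported (beta : nat * nat -> R) x p q :
  supported_at x (p, q) -> supported_at (shift2 beta x) (p, q.+1).
Proof. by move=> x0 [i [|j]] //= ij; rewrite x0 ?mulr0. Qed.

Lemma in_l2_shift1 (alpha : nat * nat -> R) M x : (forall k, `|alpha k| <= M) ->
  in_l2 x -> in_l2 (shift1 alpha x).
Proof.
move=> aM [Mx xMx]; exists (M ^+ 2 * Mx) => N.
change (dsum (fun k => sqnorm (shift1 alpha x k)) N <= M ^+ 2 * Mx).
apply: (le_trans (y := M ^+ 2 * dsum (fun k => sqnorm (x k)) N)).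
  apply: dsum_shiftl_le => [||j|i j]; first exact: sqr_ge0.
  - by move=> k; exact: sqnorm_ge0.
  - exact: sqnorm0.
  - by rewrite /= sqnormZ ler_wpM2r ?sqnorm_ge0 ?ler_sqr_bound.
by rewrite ler_wpM2l ?sqr_ge0 //; exact: xMx.
Qed.

Lemma in_l2_shift2 (beta : nat * nat -> R) M x : (forall k, `|beta k| <= M) ->
  in_l2 x -> in_l2 (shift2 beta x).
Proof.
move=> bM [Mx xMx]; exists (M ^+ 2 * Mx) => N.
change (dsum (fun k => sqnorm (shift2 beta x k)) N <= M ^+ 2 * Mx).
apply: (le_trans (y := M ^+ 2 * dsum (fun k => sqnorm (x k)) N)).
  apply: dsum_shiftr_le => [||i|i j]; first exact: sqr_ge0.
  - by move=> k; exact: sqnorm_ge0.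
  - exact: sqnorm0.
  - by rewrite /= sqnormZ ler_wpM2r ?sqnorm_ge0 ?ler_sqr_bound.
by rewrite ler_wpM2l ?sqr_ge0 //; exact: xMx.
Qed.

End SquareSummable.

Section QuadraticForm.
Variables (R : realType) (alpha beta : nat * nat -> R).
Local Open Scope complex_scope.
Local Notation T1 := (shift1 alpha).
Local Notation T2 := (shift2 beta).

Lemma Re_Lform x y : Re (Lform alpha beta x y) =
  Re (ip (T1 x) (T1 x)) + Re (ip (T1 y) (T2 x)) *+ 2 + Re (ip (T2 y) (T2 y)).
Proof. by rewrite /Lform !ReD (Re_ipC (T1 y)) mulr2n !addrA. Qed.

Lemma Im_Lform x y : in_l2 (T1 y) -> in_l2 (T2 x) -> Im (Lform alpha beta x y) = 0.
Proof. by move=> ly lx; rewrite /Lform !ImD !Im_ip_self (Im_ipC ly lx) addr0 add0r subrr. Qed.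

End QuadraticForm.

Section WeightCondition.
Variables (R : realType) (alpha beta : nat * nat -> R).
Hypothesis alpha_gt0 : forall k, 0 < alpha k.
Hypothesis beta_gt0 : forall k, 0 < beta k.
Local Open Scope complex_scope.
Local Notation T1 := (shift1 alpha).
Local Notation T2 := (shift2 beta).

Definition weight_cond k1 k2 :=
  alpha (k1, k2.+1) * beta (k1.+1, k2) <= alpha (k1.+1, k2) * beta (k1, k2.+1).

Lemma Re_quad_ge0 (p q s t : R) (a c : R[i]) :
  0 < p -> 0 < q -> 0 <= s -> 0 <= t -> s * t <= p * q ->
  0 <= Re (p%:C * a * (p%:C * a)^*) + Re (s%:C * c * (t%:C * a)^*) *+ 2
       + Re (q%:C * c * (q%:C * c)^*).
Proof.
move=> p0 q0 s0 t0 stpq; have pq0 : 0 < p * q by exact: mulr_gt0.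
case: a c => a1 a2 [c1 c2] /=; rewrite -(pmulr_rge0 _ pq0).
set E := (X in 0 <= X).
have -> : E = s * t * ((p * a1 + q * c1) ^+ 2 + (p * a2 + q * c2) ^+ 2)
    + (p * q - s * t) * (p ^+ 2 * (a1 ^+ 2 + a2 ^+ 2) + q ^+ 2 * (c1 ^+ 2 + c2 ^+ 2)).
  by rewrite /E; ring.
apply: addr_ge0; apply: mulr_ge0.
- exact: mulr_ge0.
- by rewrite addr_ge0 ?sqr_ge0.
- by rewrite subr_ge0.
- by apply: addr_ge0; apply: mulr_ge0; rewrite ?sqr_ge0 ?addr_ge0 ?sqr_ge0.
Qed.

(* The norm terms paired with a cross term at (i+1, j+1) inside the square of
   side N sit at (i+2, j) and (i, j+2), inside the square of side N.+1. *)
Lemma Lform_partial_sum_ge0 x y : (forall k1 k2, weight_cond k1 k2) -> forall N,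
  0 <= dsum (fun k => Re (T1 x k * (T1 x k)^*)) N.+1
       + dsum (fun k => Re (T1 y k * (T2 x k)^*)) N *+ 2
       + dsum (fun k => Re (T2 y k * (T2 y k)^*)) N.+1.
Proof.
move=> wc [|n].
  by rewrite {2}/dsum big_ord0 mul0rn addr0 addr_ge0 // dsum_ge0 // => k; exact: Re_mulJ_ge0.
rewrite (dsum_axes0 (f := fun k => Re (T1 y k * (T2 x k)^*))) => [|j|i]; last 2 first.
- by rewrite [T1 y _]/= mul0r.
- by rewrite -Re_mulJC [T2 x _]/= mul0r.
have n2 : (n + 2 <= n.+2)%N by rewrite addn2.
have n0 : (n + 0 <= n.+2)%N by rewrite addn0 leqW.
have hA := ler_dsum_shift (fun k => Re_mulJ_ge0 (T1 x k)) n2 n0.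
have hD := ler_dsum_shift (fun k => Re_mulJ_ge0 (T2 y k)) n0 n2.
apply: (le_trans _ (lerD (lerD hA (lexx _)) hD)).
rewrite -sumrMnl -!big_split sumr_ge0 // => i _.
rewrite -sumrMnl -!big_split sumr_ge0 // => j _; rewrite !addn2 !addn0.
exact: Re_quad_ge0 (alpha_gt0 _) (beta_gt0 _) (ltW (alpha_gt0 _)) (ltW (beta_gt0 _)) (wc i j).
Qed.

Lemma L_pos_weight_cond : L_pos alpha beta -> forall k1 k2, weight_cond k1 k2.
Proof.
move=> Lpos i j; rewrite /weight_cond.
set p := alpha (i.+1, j); set q := beta (i, j.+1).
set s := alpha (i, j.+1); set t := beta (i.+1, j).
pose x := point_vec (i.+1, j) q%:C; pose y := point_vec (i, j.+1) (- p)%:C.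
have x0 : supported_at x (i.+1, j) by exact: point_vec_supported.
have y0 : supported_at y (i, j.+1) by exact: point_vec_supported.
have := Lpos x y (in_l2_supported x0) (in_l2_supported y0).
rewrite lecE => /andP[_]; rewrite Re_Lform.
rewrite (Re_ip_supported _ (shift1_supported alpha x0)).
rewrite (Re_ip_supported _ (shift1_supported alpha y0)).
rewrite (Re_ip_supported _ (shift2_supported beta y0)).
rewrite /= /x /y /point_vec !eqxx /= -/p -/q -/s -/t.
have pq0 : 0 < p * q by rewrite mulr_gt0 ?alpha_gt0 ?beta_gt0.
by move=> H; rewrite -subr_ge0 -(pmulr_rge0 _ pq0); lra.
Qed.

Lemma weight_cond_L_pos M : (forall k, `|alpha k| <= M) -> (forall k, `|beta k| <= M) ->
  (forall k1 k2, weight_cond k1 k2) -> L_pos alpha beta.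
Proof.
move=> aM bM wc x y lx ly.
have l1x := in_l2_shift1 aM lx; have l1y := in_l2_shift1 aM ly.
have l2x := in_l2_shift2 bM lx; have l2y := in_l2_shift2 bM ly.
rewrite lecE; apply/andP; split; first by rewrite Im_Lform.
rewrite Re_Lform !Re_ip; apply: limn_shift_ge0; try exact: cvg_Re_ip.
exact: Lform_partial_sum_ge0.
Qed.

End WeightCondition.

Section Moments.
Variables (R : realType) (alpha beta : nat * nat -> R).
Hypothesis alpha_gt0 : forall k, 0 < alpha k.
Hypothesis beta_gt0 : forall k, 0 < beta k.
Hypothesis commuting : forall k1 k2,
  beta (k1.+1, k2) * alpha (k1, k2) = alpha (k1, k2.+1) * beta (k1, k2).
Local Notation gamma := (gamma alpha beta).

Lemma gammaSr k1 k2 : gamma k1 k2.+1 = gamma k1 k2 * beta (k1, k2) ^+ 2.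
Proof. by rewrite /gamma big_ord_recr /= mulrA. Qed.

Lemma gammaSl k1 k2 : gamma k1.+1 k2 = gamma k1 k2 * alpha (k1, k2) ^+ 2.
Proof.
elim: k2 => [|k2 IH]; first by rewrite /gamma !big_ord0 big_ord_recr /= !mulr1.
rewrite gammaSr IH gammaSr; set g := gamma k1 k2.
by rewrite -[RHS]mulrA -mulrA -!exprMn [alpha _ * _]mulrC commuting [alpha _ * _]mulrC.
Qed.

Lemma gamma_gt0 k1 k2 : 0 < gamma k1 k2.
Proof. by rewrite mulr_gt0 // prodr_gt0 // => i _; rewrite exprn_gt0. Qed.

Lemma weight_condE k1 k2 : weight_cond alpha beta k1 k2 =
  (gamma k1.+1 k2.+1 ^+ 2 <= gamma k1.+2 k2 * gamma k1 k2.+2).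
Proof.
set D := (gamma k1 k2 * alpha (k1, k2) * beta (k1, k2)) ^+ 2.
have D0 : 0 < D by rewrite exprn_gt0 // mulr_gt0 ?beta_gt0 // mulr_gt0 ?gamma_gt0 ?alpha_gt0.
have -> : gamma k1.+1 k2.+1 ^+ 2 = D * (alpha (k1, k2.+1) * beta (k1.+1, k2)) ^+ 2.
  rewrite gammaSr gammaSl /D; transitivity
    ((gamma k1 k2 * alpha (k1, k2) * beta (k1.+1, k2)) ^+ 2
     * (beta (k1.+1, k2) * alpha (k1, k2)) ^+ 2).
    by ring.
  by rewrite commuting; ring.
have -> : gamma k1.+2 k2 * gamma k1 k2.+2 = D * (alpha (k1.+1, k2) * beta (k1, k2.+1)) ^+ 2.
  by rewrite !gammaSl !gammaSr /D; ring.
by rewrite ler_pM2l // ler_sqr // nnegrE ltW // mulr_gt0.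
Qed.

End Moments.

Theorem proposition3p2 (R : realType) (alpha beta : nat * nat -> R) :
  commuting_2var_shift alpha beta ->
  [<-> L_pos alpha beta;
       forall k1 k2 : nat,
         alpha (k1, k2.+1) * beta (k1.+1, k2) <= alpha (k1.+1, k2) * beta (k1, k2.+1);
       forall k1 k2 : nat,
         gamma alpha beta k1.+1 k2.+1 ^+ 2
           <= gamma alpha beta k1.+2 k2 * gamma alpha beta k1 k2.+2].
Proof.
case=> alpha_gt0 beta_gt0 [M bounded] commuting.
have alphaM k : `|alpha k| <= M by rewrite gtr0_norm //; case: (bounded k).
have betaM k : `|beta k| <= M by rewrite gtr0_norm //; case: (bounded k).
have moments k1 k2 := weight_condE alpha_gt0 beta_gt0 commuting k1 k2.
tfae.
- exact: L_pos_weight_cond.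
- by move=> wc k1 k2; rewrite -moments; exact: wc.
- move=> mc; apply: (weight_cond_L_pos alpha_gt0 beta_gt0 alphaM betaM) => k1 k2.
  by rewrite moments.
Qed.
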